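(* Let $B$ be a commutative ring with identity and $A$ a dense subring of $B$. Then every minimal prime ideal of $A$ is of the form $Q\cap A$ for a unique minimal prime ideal $Q$ of $B$; and conversely, for every minimal prime ideal $Q$ of $B$, $Q\cap A$ is a minimal prime ideal of $A$.
   Context: All rings are commutative with identity; subrings contain the identity. A subring $A$ of $B$ is dense in $B$ if for every ideal $I$ of $B$ and every $b\in B\setminus \operatorname{rad}(I)$ there exists $a\in B\setminus\operatorname{rad}(I)$ with $ab\in A$. *)

From mathcomp Require Import all_boot all_algebra.
Set Implicit Arguments. Unset Strict Implicit. Unset Printing Implicit Defensive.
Import GRing.Theory.
Local Open Scope ring_scope.

Section Defs.
Variable B : comPzRingType.

Definition set_eq (P Q : B -> Prop) := forall x, P x <-> Q x.
Definition subP (P Q : B -> Prop) := forall x, P x -> Q x.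
Definition capP (P Q : B -> Prop) : B -> Prop := fun x => P x /\ Q x.
Definition whole : B -> Prop := fun _ => True.

Definition is_subring (A : B -> Prop) :=
  [/\ A 1, (forall x y, A x -> A y -> A (x - y)) & (forall x y, A x -> A y -> A (x * y))].

Definition ideal_in (S I : B -> Prop) :=
  [/\ subP I S, I 0, (forall x y, I x -> I y -> I (x + y))
    & (forall a x, S a -> I x -> I (a * x))].

Definition prime_in (S P : B -> Prop) :=
  [/\ ideal_in S P, ~ P 1
    & (forall a b, S a -> S b -> P (a * b) -> P a \/ P b)].

Definition minimal_prime_in (S P : B -> Prop) :=
  prime_in S P /\ (forall P', prime_in S P' -> subP P' P -> subP P P').

Definition rad (I : B -> Prop) : B -> Prop := fun b => exists n : nat, I (b ^+ n).

Definition dense (A : B -> Prop) :=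
  forall I, ideal_in whole I -> forall b, ~ rad I b ->
    exists a, ~ rad I a /\ A (a * b).

End Defs.

(* A minimal prime Q of B is characterised by annihilators: each x in Q has
   s * x^n = 0 for some s outside Q.  Density replaces s by a multiple a * s
   that lies in A and still avoids Q.  So if P is a prime of S = A or S = B
   with P /\ A inside Q, the relation (a * s) * x^n = 0 forces every x in
   Q /\ S into P.  For S = A this is the minimality of Q /\ A; for S = B it
   makes Q unique over its contraction.  Existence is lying-over and needs no
   density: a prime of B avoiding the multiplicative set A \ p shrinks to a
   minimal prime of B whose contraction lies in p, hence equals p. *)

From Pilot Require Import Defs.
From mathcomp Require Import all_boot all_algebra ring.
From mathcomp Require Import boolp classical_sets.
Set Implicit Arguments. Unset Strict Implicit.
Import GRing.Theory.
Local Open Scope ring_scope.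
Local Open Scope classical_set_scope.

Lemma Zorn_above (T : Type) (R : T -> T -> Prop) (P : set T) (x0 : T) :
  (forall x, R x x) -> (forall x y z, R x y -> R y z -> R x z) -> P x0 ->
  (forall C, C `<=` P -> C !=set0 -> total_on C R ->
     exists2 u, P u & forall c, C c -> R c u) ->
  exists m, [/\ P m, R x0 m & forall y, P y -> R m y -> R y m].
Proof.
move=> Rxx Rtrans Px0 chain_ub.
(* Restricting to the elements above [x0] lets [x0] bound the empty chain. *)
pose T' := {x | P x /\ R x0 x}.
pose R' (x y : T') := `[< R (sval x) (sval y) >].
have [| | C Ctot | [m [Pm x0m]] mmax] :=
  @ZL_preorder T' (exist _ x0 (conj Px0 (Rxx x0))) R'.
- by move=> x; apply/asboolP.
- by move=> x y z /asboolP xy /asboolP yz; apply/asboolP; apply: Rtrans yz.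
- have [[c Cc]|C0] := pselect (C !=set0); last first.
    by exists (exist _ x0 (conj Px0 (Rxx x0))) => s Cs; case: C0; exists s.
  have [|||u Pu ub] := chain_ub (sval @` C).
  + by move=> _ [x _ <-]; case: (svalP x).
  + by exists (sval c), c.
  + move=> _ _ [x Cx <-] [y Cy <-].
    by case: (Ctot x y Cx Cy) => /asboolP; [left|right].
  have x0u : R x0 u by apply: Rtrans (proj2 (svalP c)) (ub _ (imageP _ Cc)).
  by exists (exist _ u (conj Pu x0u)) => s Cs; apply/asboolP/ub/imageP.
exists m; split=> // y Py my.
have y_above : P y /\ R x0 y by split; last exact: Rtrans x0m my.
by have /asboolP := mmax (exist _ y y_above) (asboolT my).
Qed.

Section SubringFacts.
Variables (B : comPzRingType) (S : set B).
Hypothesis S_subring : is_subring S.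

Lemma subring0 : S 0.
Proof. by case: S_subring => S1 SB _; rewrite -(subrr 1); apply: SB. Qed.

Lemma subringD x y : S x -> S y -> S (x + y).
Proof.
case: S_subring => _ SB _ Sx Sy; rewrite -[y]opprK -[- y]sub0r.
by apply: (SB) => //; apply: SB => //; apply: subring0.
Qed.

Lemma subringX x n : S x -> S (x ^+ n).
Proof.
case: S_subring => S1 _ SM Sx; elim: n => [|n IHn]; first by rewrite expr0.
by rewrite exprS; apply: SM.
Qed.

Lemma prime_inX P x n : prime_in S P -> S x -> P (x ^+ n) -> P x.
Proof.
case=> _ P1 Pmul Sx; elim: n => [|n IHn]; first by rewrite expr0 => /P1.
by rewrite exprS => /(Pmul _ _ Sx (subringX n Sx)) [|/IHn].
Qed.

Lemma prime_in_rad P x : prime_in S P -> S x -> Defs.rad P x -> P x.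
Proof. by move=> Pprime Sx [n]; apply: prime_inX. Qed.

End SubringFacts.

Lemma whole_subring (B : comPzRingType) : is_subring (@whole B).
Proof. by []. Qed.

Lemma prime_in_capP (B : comPzRingType) (A Q : set B) :
  is_subring A -> prime_in (@whole B) Q -> prime_in A (capP Q A).
Proof.
move=> A_subring [[_ Q0 QD QM] Q1 Qmul]; have [_ _ AM] := A_subring.
split; first split.
- by move=> x [].
- by split; last exact: subring0.
- by move=> x y [Qx Ax] [Qy Ay]; split; [apply: QD | apply: subringD].
- by move=> a x Aa [Qx Ax]; split; [apply: QM | apply: AM].
- by case.
- by move=> a b Aa Ab [/(Qmul a b I I) [] Q_ab _]; [left | right].
Qed.

Section IdealsOfB.
Variable B : comPzRingType.
Implicit Types (I J Q : set B) (C : set (set B)).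

Lemma ideal_in_bigcup C :
  C `<=` ideal_in (@whole B) -> C !=set0 -> total_on C (@subP B) ->
  ideal_in (@whole B) (\bigcup_(I in C) I).
Proof.
move=> Cideal [I0 CI0] Ctot; split.
- by [].
- by exists I0 => //; case: (Cideal I0 CI0).
- move=> x y [I CI Ix] [J CJ Jy].
  have [IJ|JI] := Ctot I J CI CJ.
  + exists J => //; case: (Cideal J CJ) => _ _ JD _.
    by apply: JD => //; apply: IJ.
  + exists I => //; case: (Cideal I CI) => _ _ ID _.
    by apply: ID => //; apply: JI.
- move=> a x _ [I CI Ix]; exists I => //.
  by case: (Cideal I CI) => _ _ _; apply.
Qed.

Lemma prime_in_bigcap C :
  C `<=` prime_in (@whole B) -> C !=set0 -> total_on C (@subP B) ->
  prime_in (@whole B) (\bigcap_(Q in C) Q).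
Proof.
move=> Cprime [Q0 CQ0] Ctot; split; first split.
- by [].
- by move=> Q CQ; case: (Cprime Q CQ) => -[].
- move=> x y Cx Cy Q CQ; case: (Cprime Q CQ) => -[_ _ QD _] _ _.
  by apply: QD; [apply: Cx | apply: Cy].
- move=> a x _ Cx Q CQ; case: (Cprime Q CQ) => -[_ _ _ QM] _ _.
  by apply: QM => //; apply: Cx.
- by move=> C1; case: (Cprime Q0 CQ0) => _ /(_ (C1 Q0 CQ0)).
move=> a b _ _ Cab.
have [|/existsNP[Q1 /not_implyP[CQ1 nQ1a]]] := pselect ((\bigcap_(Q in C) Q) a).
  by left.
right=> Q2 CQ2; apply: contrapT => nQ2b.
have prime_split Q : C Q -> ~ Q a -> ~ Q b -> False.
  by move=> CQ nQa nQb; case: (Cprime Q CQ) => _ _ /(_ a b I I (Cab Q CQ)) [].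
have [Q12|Q21] := Ctot Q1 Q2 CQ1 CQ2.
- by apply: (prime_split Q1) => // /Q12.
- by apply: (prime_split Q2) => // /Q21.
Qed.

Definition ideal_adjoin I c : set B :=
  [set z | exists i r, I i /\ z = i + r * c].

Lemma ideal_adjoin_ideal I c :
  ideal_in (@whole B) I -> ideal_in (@whole B) (ideal_adjoin I c).
Proof.
case=> _ I0 ID IM; split.
- by [].
- by exists 0, 0; rewrite mul0r addr0.
- move=> _ _ [i [r [Ii ->]]] [j [s [Ij ->]]].
  by exists (i + j), (r + s); split; [apply: ID | ring].
- move=> a _ _ [i [r [Ii ->]]].
  by exists (a * i), (a * r); split; [apply: IM | ring].
Qed.

Lemma ideal_adjoin_sub I c : subP I (ideal_adjoin I c).
Proof. by move=> x Ix; exists x, 0; rewrite mul0r addr0. Qed.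

Lemma ideal_adjoin_gen I c : I 0 -> ideal_adjoin I c c.
Proof. by move=> I0; exists 0, 1; rewrite mul1r add0r. Qed.

Section MultiplicativeSet.
Variable M : set B.
Hypotheses (M1 : M 1) (MM : forall x y, M x -> M y -> M (x * y)).

Lemma maximal_disjoint_ideal_prime I :
  ideal_in (@whole B) I -> (forall x, M x -> ~ I x) ->
  (forall J, ideal_in (@whole B) J -> (forall x, M x -> ~ J x) ->
     subP I J -> subP J I) ->
  prime_in (@whole B) I.
Proof.
move=> Iideal Idisj Imax; have [_ I0 ID Imul] := Iideal.
split=> //; first exact: Idisj.
move=> a b _ _ Iab; apply: contrapT => /not_orP[nIa nIb].
have meets c : ~ I c -> exists i r, I i /\ M (i + r * c).
  move=> nIc; apply: contrapT => disj; apply/nIc/(Imax (ideal_adjoin I c)).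
  - exact: ideal_adjoin_ideal.
  - by move=> x Mx [i [r [Ii Ex]]]; apply: disj; exists i, r; rewrite -Ex.
  - exact: ideal_adjoin_sub.
  - exact: ideal_adjoin_gen.
have [i1 [r1 [Ii1 Ma]]] := meets a nIa.
have [i2 [r2 [Ii2 Mb]]] := meets b nIb.
apply: (Idisj _ (MM Ma Mb)).
rewrite (_ : _ * _ = i1 * (i2 + r2 * b) + (i2 * (r1 * a) + r1 * r2 * (a * b)));
  last by ring.
apply: (ID); first by rewrite mulrC; apply: Imul.
by apply: ID; [rewrite mulrC|]; apply: Imul.
Qed.

Lemma exists_prime_disjoint : ~ M 0 ->
  exists Q, prime_in (@whole B) Q /\ forall x, M x -> ~ Q x.
Proof.
move=> nM0; pose P I := ideal_in (@whole B) I /\ forall x, M x -> ~ I x.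
have [I [[Iideal Idisj] _ Imax]] :
    exists I, [/\ P I, subP [set 0] I & forall J, P J -> subP I J -> subP J I].
  apply: Zorn_above.
  - by move=> I x.
  - by move=> I J K IJ JK x /IJ /JK.
  - split; last by move=> x Mx x0; apply: nM0; rewrite -x0.
    by split=> // [x y -> ->|a x _ ->]; rewrite ?addr0 ?mulr0.
  - move=> C CP C0 Ctot; exists (\bigcup_(I in C) I); last first.
      by move=> I CI x Ix; exists I.
    split; first by apply: ideal_in_bigcup => // I /CP[].
    by move=> x Mx [I CI]; apply: (CP I CI).2.
exists I; split=> //; apply: maximal_disjoint_ideal_prime => // J Jideal Jdisj.
exact: Imax.
Qed.

End MultiplicativeSet.

Lemma exists_minimal_prime_sub Q : prime_in (@whole B) Q ->
  exists Q0, minimal_prime_in (@whole B) Q0 /\ subP Q0 Q.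
Proof.
move=> Qprime.
have chain_lb C : C `<=` prime_in (@whole B) -> C !=set0 ->
    total_on C (fun X Y => subP Y X) ->
    exists2 L, prime_in (@whole B) L & forall X, C X -> subP L X.
  move=> CP C0 Ctot; exists (\bigcap_(Q in C) Q); last first.
    by move=> X CX x /(_ X CX).
  apply: prime_in_bigcap => // X Y CX CY.
  by case: (Ctot X Y CX CY); [right | left].
have [Q0 [Q0prime Q0Q Q0min]] := Zorn_above (fun X x => id)
  (fun X Y Z XY YZ x Zx => XY x (YZ x Zx)) Qprime chain_lb.
by exists Q0.
Qed.

Lemma minimal_prime_annihilator Q x :
  minimal_prime_in (@whole B) Q -> Q x ->
  exists s n, ~ Q s /\ s * x ^+ n = 0.
Proof.
move=> [[_ nQ1 Qmul] Qmin] Qx; apply: contrapT => no_annihilator.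
pose M y := exists s n, ~ Q s /\ y = s * x ^+ n.
have [|||P [Pprime Pdisj]] := @exists_prime_disjoint M.
- by exists 1, 0%N; rewrite expr0 mulr1; split.
- move=> _ _ [s [m [nQs ->]]] [t [n [nQt ->]]].
  exists (s * t), (m + n)%N; split; first by case/(Qmul s t I I).
  by rewrite exprD; ring.
- by move=> [s [n [nQs E]]]; apply: no_annihilator; exists s, n; rewrite -E.
have PQ : subP P Q.
  move=> y Py; apply: contrapT => nQy; apply: (Pdisj y) => //.
  by exists y, 0%N; rewrite expr0 mulr1; split.
apply: (Pdisj x); last exact: Qmin P Pprime PQ x Qx.
by exists 1, 1%N; rewrite expr1 mul1r; split.
Qed.

End IdealsOfB.

Lemma minimal_prime_contraction (B : comPzRingType) (A p : set B) :
  is_subring A -> minimal_prime_in A p ->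
  exists Q, minimal_prime_in (@whole B) Q /\ set_eq p (capP Q A).
Proof.
move=> A_subring [[[_ p0 _ _] np1 pmul] pmin]; have [A1 _ AM] := A_subring.
have [|||Q [Qprime Qdisj]] := @exists_prime_disjoint B (fun y => A y /\ ~ p y).
- by [].
- move=> x y [Ax npx] [Ay npy]; split; first exact: AM.
  by case/(pmul x y Ax Ay).
- by case=> _ /(_ p0).
have [Q0 [Q0min Q0Q]] := exists_minimal_prime_sub Qprime.
have Q0p : subP (capP Q0 A) p.
  move=> x [Q0x Ax]; apply: contrapT => npx.
  exact: Qdisj x (conj Ax npx) (Q0Q x Q0x).
exists Q0; split=> // x; split; last exact: Q0p.
exact: pmin _ (prime_in_capP A_subring Q0min.1) Q0p x.
Qed.

Section DenseSubring.
Variables (B : comPzRingType) (A : set B).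
Hypothesis A_dense : dense A.

Lemma dense_mul_notin_prime Q s : prime_in (@whole B) Q -> ~ Q s ->
  exists a, ~ Q (a * s) /\ A (a * s).
Proof.
move=> Qprime nQs; have [Qideal _ Qmul] := Qprime.
have nrad_s : ~ Defs.rad Q s by move/(prime_in_rad (whole_subring B) Qprime I).
have [a [nrad_a Aas]] := A_dense Qideal nrad_s.
exists a; split=> //; case/(Qmul a s I I) => // Qa.
by apply: nrad_a; exists 1%N; rewrite expr1.
Qed.

Lemma dense_minimal_prime_sub (S P Q : set B) :
  is_subring S -> subP A S -> prime_in S P -> minimal_prime_in (@whole B) Q ->
  (forall y, A y -> P y -> Q y) -> forall x, S x -> Q x -> P x.
Proof.
move=> S_subring AS Pprime Qmin APQ x Sx Qx.
have [s [n [nQs sx0]]] := minimal_prime_annihilator Qmin Qx.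
have [a [nQas Aas]] := dense_mul_notin_prime Qmin.1 nQs.
have [[_ P0 _ _] _ Pmul] := Pprime.
have : P (a * s * x ^+ n) by rewrite -mulrA sx0 mulr0.
case/(Pmul _ _ (AS _ Aas) (subringX S_subring n Sx)) => [Pas|].
- by case: nQas; apply: APQ.
- exact: (prime_inX S_subring Pprime Sx).
Qed.

End DenseSubring.

Theorem theorem3p6 (B : comPzRingType) (A : B -> Prop) :
  is_subring A -> dense A ->
  (forall p : B -> Prop, minimal_prime_in A p ->
     (exists Q : B -> Prop, minimal_prime_in (@whole B) Q /\ set_eq p (capP Q A)) /\
     (forall Q1 Q2 : B -> Prop,
        minimal_prime_in (@whole B) Q1 -> set_eq p (capP Q1 A) ->
        minimal_prime_in (@whole B) Q2 -> set_eq p (capP Q2 A) -> set_eq Q1 Q2)) /\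
  (forall Q : B -> Prop, minimal_prime_in (@whole B) Q ->
     minimal_prime_in A (capP Q A)).
Proof.
move=> A_subring A_dense; split.
  move=> p pmin; split; first exact: minimal_prime_contraction.
  have contracted_sub Q1 Q2 :
      minimal_prime_in (@whole B) Q1 -> set_eq p (capP Q1 A) ->
      minimal_prime_in (@whole B) Q2 -> set_eq p (capP Q2 A) -> subP Q1 Q2.
    move=> Q1min E1 Q2min E2 x; apply: (dense_minimal_prime_sub A_dense
      (whole_subring B) (fun _ _ => I) Q2min.1 Q1min _ I) => y Ay Q2y.
    by have /E1[] : p y by apply/E2.
  by move=> Q1 Q2 *; split; apply: contracted_sub.
move=> Q Qmin; split; first exact: prime_in_capP Qmin.1.
move=> P Pprime PQ x [Qx Ax]; apply: (dense_minimal_prime_sub A_dense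
  A_subring (fun _ => id) Pprime Qmin _ Ax Qx).
by move=> y _ /PQ[].
Qed.
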